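(* Let $\mathcal{A}=\langle Q,\{a,b\}\rangle$ be a synchronizing complete deterministic finite automaton with $|Q|=n$ states and two input letters $a,b$, and suppose that the letter $a$ is a simple idempotent. Then $\mathcal{A}$ has a reset word of length at most $(n-1)^2$, i.e., $\operatorname{rt}(\mathcal{A})\le (n-1)^2$.
   Context: A complete deterministic finite automaton (DFA) $\langle Q,\Sigma\rangle$ consists of a finite non-empty state set $Q$, a finite non-empty input alphabet $\Sigma$, and a transition function $Q\times\Sigma\to Q$, $(q,c)\mapsto q\cdot c$, extended to words by $q\cdot\varepsilon=q$ and $q\cdot(wc)=(q\cdot w)\cdot c$. For $P\subseteq Q$ and a word $w$, $P\cdot w=\{p\cdot w\mid p\in P\}$. A word $w\in\Sigma^*$ is a reset word if $|Q\cdot w|=1$; the DFA is synchronizing if it has a reset word, and its reset threshold $\operatorname{rt}(\mathcal{A})$ is the minimum length of a reset word. A letter $a$ is a simple idempotent if $|Q\setminus Q\cdot a|=1$ and $q\cdot a=q\cdot a^2$ for all $q\in Q$. *)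

From mathcomp Require Import all_boot.
Set Implicit Arguments. Unset Strict Implicit. Unset Printing Implicit Defensive.

Definition act (Q Sigma : Type) (delta : Q -> Sigma -> Q) (q : Q) (w : seq Sigma) : Q :=
  foldl delta q w.

Definition image_word (Q : finType) (Sigma : Type) (delta : Q -> Sigma -> Q)
  (P : {set Q}) (w : seq Sigma) : {set Q} :=
  [set act delta p w | p in P].

Definition is_reset_word (Q : finType) (Sigma : Type) (delta : Q -> Sigma -> Q)
  (w : seq Sigma) : Prop :=
  #|image_word delta [set: Q] w| = 1.

Definition synchronizing (Q : finType) (Sigma : Type) (delta : Q -> Sigma -> Q) : Prop :=
  exists w, is_reset_word delta w.

Definition simple_idempotent (Q : finType) (Sigma : Type) (delta : Q -> Sigma -> Q)
  (a : Sigma) : Prop :=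
  #|[set: Q] :\: image_word delta [set: Q] [:: a]| = 1 /\
  forall q : Q, delta q a = delta (delta q a) a.

From mathcomp Require Import all_boot zify.
Set Implicit Arguments. Unset Strict Implicit. Unset Printing Implicit Defensive.

(* Let p be the state missing from Q.a: a sends p to r := p.a and fixes every
   other state.  The chain Q ⊇ Q.b ⊇ Q.b^2 ⊇ ... is stationary from some
   P := Q.b^d on, with |P| + d <= n, and b permutes P.  If p ∉ P, a acts
   trivially on P, so a reset word acts on P as a power of b; hence |P| = 1 and
   b^d is a reset word.  Otherwise every state of P has the b-period c <= |P|
   of p: a state of P whose b-orbit avoids p is the only such state, hence is
   fixed by b.  Let U ⊊ P meet the b-orbit of r.  Some d <= e < d + c has
   r.b^e ∈ U and p.b^e ∉ U, for otherwise x.w.b^e ∈ U would imply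
   x.b^(e + |w|_b) ∈ U for every word w, and a reset word would give P ⊆ U.
   The preimage of U under a b^e inside P then again meets the orbit of r and
   is strictly larger than U.  Starting from {r.b^d} after b^d (if P ≠ Q), or
   from {p, r} and finishing with a (if P = Q), at most |P| - 1, resp. n - 2,
   such steps of length <= d + c <= n give a reset word of length
   <= (n - 1)^2. *)

Section Words.
Variables (Q : finType) (Sigma : Type) (delta : Q -> Sigma -> Q).

Lemma act_cat q u v : act delta q (u ++ v) = act delta (act delta q u) v.
Proof. exact: foldl_cat. Qed.

Lemma act_nseq q t c : act delta q (nseq t c) = iter t (delta^~ c) q.
Proof. by elim: t q => //= t IH q; rewrite IH -iterSr. Qed.

Lemma reset_wordP w :
  is_reset_word delta w <-> exists s, forall q, act delta q w = s.
Proof.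
rewrite /is_reset_word /image_word; split => [/eqP/cards1P [s Ws] | [s Ws]].
  by exists s => q; apply/set1P; rewrite -Ws imset_f.
suff -> : [set act delta q w | q in [set: Q]] = [set s] by rewrite cards1.
apply/setP => q; rewrite inE; apply/imsetP/eqP => [[q' _ ->] // | ->].
by exists s; rewrite ?Ws.
Qed.

Lemma simple_idempotentP a : simple_idempotent delta a ->
  exists p, (forall q, delta q a != p) /\ (forall q, q != p -> delta q a = q).
Proof.
move=> [/eqP/cards1P [p missing] a_idem]; exists p.
have imageE q : (q \in image_word delta [set: Q] [:: a]) = (q != p).
  by move/setP/(_ q): missing; rewrite !inE andbT => <-; rewrite negbK.
split=> [q | q]; first by rewrite -imageE imset_f.
by rewrite -imageE => /imsetP [q' _ ->]; rewrite -a_idem.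
Qed.

End Words.

Section Iterates.
Variables (T : finType) (f : T -> T).

Lemma eventually_stable_range :
  exists d (P : {set T}), [/\ f @: P = P, forall x, iter d f x \in P & #|P| + d <= #|T|].
Proof.
pose range j := [set iter j f x | x : T].
have rangeS j : range j.+1 = f @: range j by rewrite -imset_comp; apply: eq_imset.
have rangeS_sub j : range j.+1 \subset range j.
  by apply/subsetP => _ /imsetP [x _ ->]; rewrite iterSr imset_f.
have stable_or_shrinking j :
    (exists d, range d.+1 = range d /\ #|range d| + d <= #|T|) \/ #|range j| + j <= #|T|.
  elim: j => [|j [stable | IH]]; [by right; rewrite addn0 max_card | by left | ].
  have [E | NE] := eqVneq (range j.+1) (range j); first by left; exists j; split.
  have lt_range : #|range j.+1| < #|range j|.
    by rewrite proper_card // properEneq NE rangeS_sub.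
  by right; lia.
have [[d [E bound]] | ] := stable_or_shrinking #|T|.+1; last lia.
by exists d, (range d); split=> // [|x]; [rewrite -rangeS | exact: imset_f].
Qed.

Variable P : {set T}.
Hypothesis fP : f @: P = P.

Lemma iter_stable t : iter t f @: P = P.
Proof.
elim: t => [|t IH]; first exact: imset_id.
by rewrite -[RHS]fP -[in RHS]IH -imset_comp.
Qed.

Lemma mem_iter_stable t x : x \in P -> iter t f x \in P.
Proof. by rewrite -{2}(iter_stable t); apply: imset_f. Qed.

Lemma iter_stable_onto t y : y \in P -> exists2 x, x \in P & y = iter t f x.
Proof. by rewrite -{1}(iter_stable t) => /imsetP. Qed.

Lemma iter_stable_inj t : {in P &, injective (iter t f)}.
Proof. by apply/imset_injP; rewrite iter_stable. Qed.

Lemma stable_period x : x \in P -> exists2 c, 0 < c <= #|P| & iter c f x = x.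
Proof.
move=> xP; pose g (i : 'I_#|P|.+1) := iter i f x.
have /injectivePn [i [j neq_ij eq_ij]] : ~~ injectiveb g.
  apply/injectiveP => g_inj.
  have : [set g i | i in 'I_#|P|.+1] \subset P.
    by apply/subsetP => _ /imsetP [i _ ->]; apply: mem_iter_stable.
  by move/subset_leq_card; rewrite card_imset // card_ord ltnn.
wlog lt_ij : i j neq_ij eq_ij / i < j.
  move=> wlog_ij; case: (ltngtP i j) => [|lt_ji|/val_inj eq_ij']; first exact: wlog_ij.
    by apply: (wlog_ij j i); rewrite // eq_sym.
  by rewrite eq_ij' eqxx in neq_ij.
exists (j - i); first by rewrite subn_gt0 lt_ij /= (leq_trans (leq_subr _ _)) // -ltnS.
apply: (iter_stable_inj (t := i) (mem_iter_stable _ xP) xP).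
by rewrite -iterD subnKC 1?ltnW.
Qed.

End Iterates.

Section SimpleIdempotentLetter.
Variables (Q Sigma : finType) (delta : Q -> Sigma -> Q) (a b : Sigma) (p : Q).
Hypothesis neq_ab : a != b.
Hypothesis letter_ab : forall c : Sigma, c = a \/ c = b.
Hypothesis a_miss_p : forall q, delta q a != p.
Hypothesis a_fix : forall q, q != p -> delta q a = q.

Local Notation B := (delta^~ b).
Local Notation r := (delta p a).

Lemma act_avoiding_p w x :
  (forall k, iter k B x != p) -> act delta x w = iter (count_mem b w) B x.
Proof.
elim: w x => [|c w IH] x avoid //=.
case: (letter_ab c) => ->; rewrite ?eqxx ?(negbTE neq_ab).
  by rewrite a_fix ?IH //; apply: (avoid 0).
by rewrite IH -?iterSr // => k; rewrite -iterSr.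
Qed.

Lemma act_orbit_r w k : exists k', act delta (iter k B r) w = iter k' B r.
Proof.
elim: w k => [|c w IH] k /=; first by exists k.
case: (letter_ab c) => ->; last exact: (IH k.+1).
have [-> | ne_p] := eqVneq (iter k B r) p; first exact: (IH 0).
by rewrite a_fix.
Qed.

Variables (w0 : seq Sigma) (s : Q).
Hypothesis w0_reset : forall q, act delta q w0 = s.
Variables (d : nat) (P : {set Q}).
Hypothesis BP : B @: P = P.
Hypothesis iter_d_in_P : forall x, iter d B x \in P.
Hypothesis P_d_bound : #|P| + d <= #|Q|.

Lemma iter_ge_d_in_P e x : d <= e -> iter e B x \in P.
Proof. by move=> de; rewrite -(subnKC de) iterD. Qed.

Lemma avoiding_p_unique x y : x \in P -> y \in P ->
  (forall k, iter k B x != p) -> (forall k, iter k B y != p) -> x = y.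
Proof.
move=> xP yP avoid_x avoid_y; apply: (iter_stable_inj BP (t := count_mem b w0)) => //.
by rewrite -!act_avoiding_p // !w0_reset.
Qed.

Lemma reset_p_notin_P : p \notin P ->
  exists w, is_reset_word delta w /\ size w <= (#|Q| - 1) ^ 2.
Proof.
move=> pNP.
have /cards1P [z Pz] : #|P| == 1.
  rewrite eqn_leq card_gt0; apply/andP; split; last by apply/set0Pn; exists (iter d B p).
  apply/card_le1_eqP => x y xP yP; apply: avoiding_p_unique => // k;
  by apply: contraNneq pNP => <-; apply: mem_iter_stable.
exists (nseq d b); split.
  by apply/reset_wordP; exists z => q; apply/set1P; rewrite -Pz act_nseq.
by rewrite size_nseq; move: P_d_bound; rewrite Pz cards1; nia.
Qed.

Section PeriodicCase.
Hypothesis pP : p \in P.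
Variable c : nat.
Hypothesis c_gt0 : 0 < c.
Hypothesis c_le_P : c <= #|P|.
Hypothesis p_period : iter c B p = p.

Lemma P_period x : x \in P -> iter c B x = x.
Proof.
move=> xP; apply/eqP/contraT => ne_x.
have avoid_x k : iter k B x != p.
  apply: contraNneq ne_x => xk_p; apply/eqP/(iter_stable_inj BP (t := k)) => //.
    exact: mem_iter_stable.
  by rewrite -iterD addnC iterD xk_p p_period.
have Bx : B x = x.
  apply: avoiding_p_unique => //; first exact: (mem_iter_stable BP 1).
  by move=> k; rewrite -iterSr.
by rewrite iter_fix ?eqxx in ne_x.
Qed.

Lemma iter_mod_period e x : d <= e -> iter e B x = iter (d + (e - d) %% c) B x.
Proof.
move=> de; rewrite -{1}(subnKC de) {1}(divn_eq (e - d) c) addnCA iterD iterM.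
by rewrite iter_fix // P_period // iter_ge_d_in_P ?leq_addr.
Qed.

Definition meets_orbit_r (U : {set Q}) := exists k, iter (d + k) B r \in U.

Lemma closed_orbit_full (U : {set Q}) : meets_orbit_r U ->
  (forall e, d <= e -> iter e B r \in U -> iter e B p \in U) -> P \subset U.
Proof.
move=> [k1 rU] closedU.
have shift w e x : d <= e ->
    iter e B (act delta x w) \in U -> iter (e + count_mem b w) B x \in U.
  elim: w e x => [|c' w IH] e x de /=; first by rewrite addn0.
  move/IH => /(_ de); case: (letter_ab c') => ->; rewrite ?eqxx ?(negbTE neq_ab) /=.
    have [-> | ne_p] := eqVneq x p; last by rewrite a_fix.
    by apply: closedU => //; lia.
  by rewrite -iterSr add1n addnS.
have [k0] := act_orbit_r w0 0; rewrite w0_reset => s_r.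
(* Chosen so that s.b^e = r.b^(d + k1) ∈ U. *)
pose e := k0 * c.-1 + (d + k1).
have sU : iter e B s \in U.
  rewrite s_r -iterD (_ : e + k0 = k0 * c + (d + k1)); last first.
    by rewrite /e addnAC -mulnSr prednK.
  by rewrite iterD iterM iter_fix // P_period // iter_ge_d_in_P ?leq_addr.
apply/subsetP => _ /(iter_stable_onto BP (e + count_mem b w0)) [x _ ->].
by apply: shift; [rewrite /e addnCA leq_addr | rewrite w0_reset].
Qed.

Lemma separating_shift (U : {set Q}) : U \subset P -> U != P -> meets_orbit_r U ->
  exists2 e, d <= e < d + c & (iter e B r \in U) && (iter e B p \notin U).
Proof.
move=> UP neUP metU.
have [/existsP [j sep_j] | no_sep] :=
  boolP [exists j : 'I_c, (iter (d + j) B r \in U) && (iter (d + j) B p \notin U)].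
  by exists (d + j); rewrite ?leq_addr ?ltn_add2l ?ltn_ord.
case/negP: neUP; rewrite eqEsubset UP; apply: closed_orbit_full => // e de rU.
move/existsPn: no_sep => /(_ (Ordinal (ltn_pmod (e - d) c_gt0))) /=.
by rewrite -!iter_mod_period // rU negbK.
Qed.

Definition preim_in_P (U : {set Q}) (u : seq Sigma) : {set Q} :=
  [set x in P | act delta x u \in U].

Lemma extend_meeting_set (U : {set Q}) : U \subset P -> U != P -> meets_orbit_r U ->
  exists2 u, size u <= d + c & meets_orbit_r (preim_in_P U u) /\ #|U| < #|preim_in_P U u|.
Proof.
move=> UP neUP metU.
have [e /andP [de lt_e] /andP [rU pNU]] := separating_shift UP neUP metU.
have act_u x : act delta x (a :: nseq e b) = iter e B (delta x a) by rewrite /= act_nseq.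
exists (a :: nseq e b); first by rewrite /= size_nseq.
set U' := preim_in_P U _.
have pU' : p \in U' by rewrite inE pP act_u.
split.
  (* d + (d * c - d) is a multiple of c, so x.a.b^e = r.b^e unless x = p. *)
  exists (d * c - d); set x := iter _ B r.
  have [-> // | ne_p] := eqVneq x p.
  rewrite inE iter_ge_d_in_P ?leq_addr // act_u a_fix //= -iterD addnC iterD.
  by rewrite subnKC ?leq_pmulr // iterM iter_fix // P_period // iter_ge_d_in_P.
pose W := [set x in P | iter e B x \in U].
have UW : #|U| <= #|W|.
  apply: leq_trans (leq_imset_card (iter e B) W); apply/subset_leq_card/subsetP => y yU.
  have [x xP y_eq] := iter_stable_onto BP e (subsetP UP y yU).
  by apply/imsetP; exists x; rewrite // inE xP -y_eq.
have WU' : W \subset U'.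
  apply/subsetP => x; rewrite !inE => /andP [xP xU]; rewrite xP act_u a_fix //.
  by apply: contraNneq pNU => <-.
have pNW : p \notin W by rewrite inE negb_and pNU orbT.
have : #|p |: W| <= #|U'| by apply/subset_leq_card; rewrite subUset sub1set pU' WU'.
by rewrite cardsU1 pNW; lia.
Qed.

Lemma compress_P_into t (U : {set Q}) : U \subset P -> meets_orbit_r U -> #|P| - #|U| <= t ->
  exists2 v, size v <= t * (d + c) & forall x, x \in P -> act delta x v \in U.
Proof.
elim: t U => [|t IH] U UP metU le_t.
all: have [-> | neUP] := eqVneq U P; first by exists [::].
all: have ltUP : #|U| < #|P| by rewrite proper_card // properEneq neUP.
  lia.
have [u size_u [metU' ltU']] := extend_meeting_set UP neUP metU.
have U'P : preim_in_P U u \subset P by apply/subsetP => x; rewrite inE => /andP [].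
have [v size_v vU'] := IH _ U'P metU' (ltac:(lia)).
exists (v ++ u); first by rewrite size_cat mulSn addnC leq_add.
by move=> x xP; rewrite act_cat; have := vU' x xP; rewrite inE => /andP [].
Qed.

Lemma reset_P_proper : #|P| < #|Q| ->
  exists w, is_reset_word delta w /\ size w <= (#|Q| - 1) ^ 2.
Proof.
move=> ltPQ; set y := iter d B r.
have yP : [set y] \subset P by rewrite sub1set iter_d_in_P.
have metU0 : meets_orbit_r [set y] by exists 0; rewrite addn0 set11.
have [v size_v vy] := compress_P_into yP metU0 (leqnn _).
exists (nseq d b ++ v); split.
  apply/reset_wordP; exists y => q; apply/set1P.
  by rewrite act_cat act_nseq vy ?iter_d_in_P.
rewrite size_cat size_nseq; move: size_v; rewrite cards1; nia.
Qed.

Lemma reset_P_full : #|P| = #|Q| ->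
  exists w, is_reset_word delta w /\ size w <= (#|Q| - 1) ^ 2.
Proof.
move=> eqPQ; have d0 : d = 0 by lia.
have PT : P = [set: Q] by apply/eqP; rewrite eqEcard subsetT cardsT eqPQ leqnn.
have U1P : [set p; r] \subset P by rewrite PT subsetT.
have metU1 : meets_orbit_r [set p; r] by exists 0; rewrite d0 !inE eqxx orbT.
have card_U1 : #|[set p; r]| = 2 by rewrite cards2 eq_sym a_miss_p.
have [v size_v vU1] := compress_P_into U1P metU1 (leqnn _).
exists (v ++ [:: a]); split.
  apply/reset_wordP; exists r => q; have qP : q \in P by rewrite PT inE.
  by rewrite act_cat; have /set2P [-> | ->] //= := vU1 q qP; apply/a_fix/a_miss_p.
have n_ge2 : 2 <= #|Q| by rewrite -card_U1 max_card.
have c_le_Q : c <= #|Q| by rewrite -eqPQ.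
move: size_v; rewrite size_cat card_U1 eqPQ d0 /=.
move: (size v) #|Q| n_ge2 c_le_Q => sv n *; nia.
Qed.

End PeriodicCase.

Lemma reset_word_bound : exists w, is_reset_word delta w /\ size w <= (#|Q| - 1) ^ 2.
Proof.
have [pP | pNP] := boolP (p \in P); last exact: reset_p_notin_P.
have [c /andP [c_gt0 c_le_P] p_period] := stable_period BP pP.
have [ltPQ | leQP] := ltnP #|P| #|Q|; first exact: (reset_P_proper pP c_gt0 c_le_P p_period).
by apply: (reset_P_full pP c_gt0 c_le_P p_period); apply/eqP; rewrite eqn_leq max_card.
Qed.

End SimpleIdempotentLetter.

Theorem mainTheorem1 (Q Sigma : finType) (delta : Q -> Sigma -> Q) (a b : Sigma) (n : nat) :
  #|Q| = n ->
  a != b ->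
  (forall c : Sigma, c = a \/ c = b) ->
  synchronizing delta ->
  simple_idempotent delta a ->
  exists w : seq Sigma, is_reset_word delta w /\ size w <= (n - 1) ^ 2.
Proof.
move=> <- neq_ab letter_ab [w0 /reset_wordP [s w0_reset]].
move=> idem_a; have [p [a_miss_p a_fix]] := simple_idempotentP idem_a.
have [d [P [BP iter_d_in_P P_d_bound]]] := eventually_stable_range (delta^~ b).
exact: (reset_word_bound neq_ab letter_ab a_miss_p a_fix w0_reset BP iter_d_in_P P_d_bound).
Qed.
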